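(* For every safe sentence $F$ there exists a variable-free formula $G$ such that $\mathrm{SM}[F]$ is equivalent to $G\land\mathit{SPP}_{c(F)}$, where $c(F)$ is the set of object constants occurring in $F$.
   Context: Formulas are first-order formulas over a signature with object constants, predicate constants and equality, but no function constants of arity $>0$. Primitive connectives are $\bot,\land,\lor,\rightarrow$, quantifiers $\forall,\exists$; $\neg G$ is $G\rightarrow\bot$, $\top$ is $\bot\rightarrow\bot$, $G\leftrightarrow H$ is $(G\rightarrow H)\land(H\rightarrow G)$. A sentence is a formula without free variables. Stable model operator: for a sentence $F$, let $\mathbf p=p_1,\dots,p_n$ be all predicate constants occurring in $F$ and $\mathbf u=u_1,\dots,u_n$ distinct predicate variables with matching arities. $\mathbf u\le\mathbf p$ is $\bigwedge_i\forall\mathbf x(u_i(\mathbf x)\rightarrow p_i(\mathbf x))$, $\mathbf u=\mathbf p$ is $\bigwedge_i\forall\mathbf x(u_i(\mathbf x)\leftrightarrow p_i(\mathbf x))$, $\mathbf u<\mathbf p$ is $(\mathbf u\le\mathbf p)\land\neg(\mathbf u=\mathbf p)$. $F^*(\mathbf u)$: $p_i(\mathbf t)^*=u_i(\mathbf t)$; $(t_1=t_2)^*=(t_1=t_2)$; $\bot^*=\bot$; $(G\land H)^*=G^*\land H^*$; $(G\lor H)^*=G^*\lor H^*$; $(G\rightarrow H)^*=(G^*\rightarrow H^* )\land(G\rightarrow H)$; $(\forall xG)^*=\forall xG^*$; $(\exists xG)^*=\exists xG^*$. $\mathrm{SM}[F]$ is $F\land\neg\exists\mathbf u((\mathbf u<\mathbf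 p)\land F^*(\mathbf u))$. Restricted variables: for quantifier-free $G$, $\mathrm{RV}(G)$ is: $\emptyset$ if $G$ is an equality between two variables; the set of variables of $G$ if $G$ is any other atomic formula; $\mathrm{RV}(\bot)=\emptyset$; $\mathrm{RV}(G\land H)=\mathrm{RV}(G)\cup\mathrm{RV}(H)$; $\mathrm{RV}(G\lor H)=\mathrm{RV}(G)\cap\mathrm{RV}(H)$; $\mathrm{RV}(G\rightarrow H)=\emptyset$. An occurrence of a subformula or variable is positive if the number of implications containing it in their antecedent is even, negative otherwise, and strictly positive if it is in the antecedent of no implication. A prenex sentence $Q_1x_1\cdots Q_nx_nM$ ($M$ quantifier-free, $x_i$ distinct) is semi-safe if every strictly positive occurrence of every $x_i$ in $M$ belongs to a subformula $G\rightarrow H$ with $x_i\in\mathrm{RV}(G)$. Simplification transformations: $\neg\bot\mapsto\top$, $\neg\top\mapsto\bot$; $\bot\land G\mapsto\bot$, $G\land\bot\mapsto\bot$, $\top\land G\mapsto G$, $G\land\top\mapsto G$; $\bot\lor G\mapsto G$, $G\lor\bot\mapsto G$, $\top\lor G\mapsto\top$, $G\lor\top\mapsto\top$; $\bot\rightarrow G\mapsto\top$, $G\rightarrow\top\mapsto\top$, $\top\rightarrow G\mapsto G$. A variable $x$ is positively (resp. negatively) weakly restricted in a quantifier-free formula $G$ if the formula obtained from $G$ by first replacing every atomic formula $A$ of $G$ with $x\in\mathrm{RV}(A)$ by $\bot$ and then applying the simplification transformations is $\top$ (resp. $\bot$). A semi-safe prenex sentence $Q_1x_1\cdots Q_nx_nM$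 is safe if for every occurrence of every variable $x_i$: (a) if $Q_i=\forall$, the occurrence belongs to a positive subformula (of the sentence) in which $x_i$ is positively weakly restricted, or to a negative subformula in which $x_i$ is negatively weakly restricted; (b) if $Q_i=\exists$, the occurrence belongs to a negative subformula in which $x_i$ is positively weakly restricted, or to a positive subformula in which $x_i$ is negatively weakly restricted. For a finite set $\mathbf c$ of object constants, $\mathit{in}_{\mathbf c}(x_1,\dots,x_m)$ is $\bigwedge_{1\le j\le m}\bigvee_{c\in\mathbf c}x_j=c$, and $\mathit{SPP}_{\mathbf c}$ is the conjunction of $\forall\mathbf x(p_i(\mathbf x)\rightarrow\mathit{in}_{\mathbf c}(\mathbf x))$ over all predicate constants $p_i$ occurring in $F$. *)

From Stdlib Require Import List Arith Bool.
Import ListNotations.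
Set Implicit Arguments.

Inductive term (C : Type) : Type :=
| Var (x : nat)
| Cst (c : C).
Arguments Var {C} x.
Arguments Cst {C} c.

Inductive form (C P : Type) : Type :=
| FBot
| FAtom (p : P) (ts : list (term C))
| FEq (t1 t2 : term C)
| FAnd (f g : form C P)
| FOr (f g : form C P)
| FImp (f g : form C P)
| FAll (x : nat) (f : form C P)
| FEx (x : nat) (f : form C P).
Arguments FBot {C P}.
Arguments FAtom {C P} p ts.
Arguments FEq {C P} t1 t2.
Arguments FAnd {C P} f g.
Arguments FOr {C P} f g.
Arguments FImp {C P} f g.
Arguments FAll {C P} x f.
Arguments FEx {C P} x f.

Definition FTop {C P} : form C P := FImp FBot FBot.

Fixpoint wf {C P} (ar : P -> nat) (f : form C P) : Prop :=
  match f with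
  | FAtom p ts => length ts = ar p
  | FAnd g h | FOr g h | FImp g h => wf ar g /\ wf ar h
  | FAll _ g | FEx _ g => wf ar g
  | _ => True
  end.

Definition term_hasb {C} (x : nat) (t : term C) : bool :=
  match t with Var y => Nat.eqb y x | Cst _ => false end.

Definition term_is_var {C} (t : term C) : bool :=
  match t with Var _ => true | Cst _ => false end.

Fixpoint free_in {C P} (x : nat) (f : form C P) : Prop :=
  match f with
  | FBot => False
  | FAtom _ ts => existsb (term_hasb x) ts = true
  | FEq t1 t2 => term_hasb x t1 = true \/ term_hasb x t2 = true
  | FAnd g h | FOr g h | FImp g h => free_in x g \/ free_in x h
  | FAll y g | FEx y g => y <> x /\ free_in x g
  end.

Definition sentence {C P} (f : form C P) : Prop := forall x, ~ free_in x f.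

Fixpoint var_free {C P} (f : form C P) : Prop :=
  match f with
  | FBot => True
  | FAtom _ ts => existsb term_is_var ts = false
  | FEq t1 t2 => term_is_var t1 = false /\ term_is_var t2 = false
  | FAnd g h | FOr g h | FImp g h => var_free g /\ var_free h
  | FAll _ _ | FEx _ _ => False
  end.

Definition term_consts {C} (t : term C) : list C :=
  match t with Cst c => [c] | Var _ => [] end.

Fixpoint consts {C P} (f : form C P) : list C :=
  match f with
  | FBot => []
  | FAtom _ ts => flat_map term_consts ts
  | FEq t1 t2 => term_consts t1 ++ term_consts t2
  | FAnd g h | FOr g h | FImp g h => consts g ++ consts h
  | FAll _ g | FEx _ g => consts g
  end.

Fixpoint preds {C P} (f : form C P) : list P :=
  match f with
  | FAtom p _ => [p]
  | FAnd g h | FOr g h | FImp g h => preds g ++ preds h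
  | FAll _ g | FEx _ g => preds g
  | _ => []
  end.

Definition term_val {C D} (ic : C -> D) (env : nat -> D) (t : term C) : D :=
  match t with Var x => env x | Cst c => ic c end.

Definition upd {D} (env : nat -> D) (x : nat) (d : D) : nat -> D :=
  fun y => if Nat.eqb y x then d else env y.

Fixpoint sat {C P D} (ic : C -> D) (ip : P -> list D -> Prop) (env : nat -> D)
  (f : form C P) : Prop :=
  match f with
  | FBot => False
  | FAtom p ts => ip p (map (term_val ic env) ts)
  | FEq t1 t2 => term_val ic env t1 = term_val ic env t2
  | FAnd g h => sat ic ip env g /\ sat ic ip env h
  | FOr g h => sat ic ip env g \/ sat ic ip env h
  | FImp g h => sat ic ip env g -> sat ic ip env h
  | FAll x g => forall d : D, sat ic ip (upd env x d) g
  | FEx x g => exists d : D, sat ic ip (upd env x d) g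
  end.

Fixpoint lift {C P Q} (h : P -> Q) (f : form C P) : form C Q :=
  match f with
  | FBot => FBot
  | FAtom p ts => FAtom (h p) ts
  | FEq t1 t2 => FEq t1 t2
  | FAnd g k => FAnd (lift h g) (lift h k)
  | FOr g k => FOr (lift h g) (lift h k)
  | FImp g k => FImp (lift h g) (lift h k)
  | FAll x g => FAll x (lift h g)
  | FEx x g => FEx x (lift h g)
  end.

(* F*(u): over the signature P + P, where inl p is the constant p and
   inr p is the predicate variable u_p. *)
Fixpoint star {C P} (f : form C P) : form C (P + P) :=
  match f with
  | FBot => FBot
  | FAtom p ts => FAtom (inr p) ts
  | FEq t1 t2 => FEq t1 t2
  | FAnd g h => FAnd (star g) (star h)
  | FOr g h => FOr (star g) (star h)
  | FImp g h => FAnd (FImp (star g) (star h)) (FImp (lift inl g) (lift inl h))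
  | FAll x g => FAll x (star g)
  | FEx x g => FEx x (star g)
  end.

Definition pcombine {P D} (ip U : P -> list D -> Prop) : P + P -> list D -> Prop :=
  fun q => match q with inl p => ip p | inr p => U p end.

(* truth of SM[F] = F /\ ~ exists u ((u < p) /\ F*(u)), written out semantically;
   u ranges over relations of the arities of the p_i (lists of length ar p). *)
Definition sat_SM {C P D} (ar : P -> nat) (ic : C -> D) (ip : P -> list D -> Prop)
  (env : nat -> D) (F : form C P) : Prop :=
  sat ic ip env F /\
  ~ (exists U : P -> list D -> Prop,
       (forall p, In p (preds F) -> forall ds, length ds = ar p -> U p ds -> ip p ds) /\
       ~ (forall p, In p (preds F) -> forall ds, length ds = ar p -> (U p ds <-> ip p ds)) /\
       sat ic (pcombine ip U) env (star F)).

Fixpoint bigand {C P} (l : list (form C P)) : form C P :=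
  match l with [] => FTop | f :: l => FAnd f (bigand l) end.
Fixpoint bigor {C P} (l : list (form C P)) : form C P :=
  match l with [] => FBot | f :: l => FOr f (bigor l) end.

Definition in_c {C P} (cs : list C) (xs : list nat) : form C P :=
  bigand (map (fun x => bigor (map (fun c => FEq (Var x) (Cst c)) cs)) xs).

Fixpoint forall_list {C P} (xs : list nat) (f : form C P) : form C P :=
  match xs with [] => f | x :: xs => FAll x (forall_list xs f) end.

Definition SPP {C P} (ar : P -> nat) (cs : list C) (ps : list P) : form C P :=
  bigand (map (fun p => let xs := seq 0 (ar p) in
                        forall_list xs (FImp (FAtom p (map Var xs)) (in_c cs xs))) ps).

Fixpoint RV {C P} (f : form C P) (x : nat) : bool :=
  match f with
  | FBot => false
  | FAtom _ ts => existsb (term_hasb x) ts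
  | FEq (Var _) (Var _) => false
  | FEq t1 t2 => term_hasb x t1 || term_hasb x t2
  | FAnd g h => RV g x || RV h x
  | FOr g h => RV g x && RV h x
  | FImp _ _ => false
  | FAll _ _ | FEx _ _ => false (* RV is only used on quantifier-free formulas *)
  end.

Fixpoint qfree {C P} (f : form C P) : Prop :=
  match f with
  | FAnd g h | FOr g h | FImp g h => qfree g /\ qfree h
  | FAll _ _ | FEx _ _ => False
  | _ => True
  end.

Inductive quant := QAll | QEx.

Fixpoint prenex {C P} (pre : list (quant * nat)) (M : form C P) : form C P :=
  match pre with
  | [] => M
  | (QAll, x) :: pre => FAll x (prenex pre M)
  | (QEx, x) :: pre => FEx x (prenex pre M)
  end.

(* every strictly positive occurrence of x in f belongs to a subformula G -> H
   with x in RV(G) *)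
Fixpoint sp_restricted {C P} (x : nat) (f : form C P) : Prop :=
  match f with
  | FBot => True
  | FAtom _ ts => existsb (term_hasb x) ts = false
  | FEq t1 t2 => term_hasb x t1 = false /\ term_hasb x t2 = false
  | FAnd g h | FOr g h => sp_restricted x g /\ sp_restricted x h
  | FImp g h => RV g x = true \/ sp_restricted x h
  | FAll _ g | FEx _ g => sp_restricted x g
  end.

Definition is_top {C P} (f : form C P) : bool :=
  match f with FImp FBot FBot => true | _ => false end.
Definition is_bot {C P} (f : form C P) : bool :=
  match f with FBot => true | _ => false end.

Fixpoint repl {C P} (x : nat) (f : form C P) : form C P :=
  match f with
  | FBot => FBot
  | FAtom p ts => if RV (FAtom p ts) x then FBot else FAtom p ts
  | FEq t1 t2 => if RV (@FEq C P t1 t2) x then FBot else FEq t1 t2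
  | FAnd g h => FAnd (repl x g) (repl x h)
  | FOr g h => FOr (repl x g) (repl x h)
  | FImp g h => FImp (repl x g) (repl x h)
  | FAll y g => FAll y (repl x g)
  | FEx y g => FEx y (repl x g)
  end.

(* exhaustive application of the simplification transformations (bottom-up) *)
Fixpoint simp {C P} (f : form C P) : form C P :=
  match f with
  | FAnd g h =>
      let g' := simp g in let h' := simp h in
      if is_bot g' || is_bot h' then FBot
      else if is_top g' then h'
      else if is_top h' then g'
      else FAnd g' h'
  | FOr g h =>
      let g' := simp g in let h' := simp h in
      if is_top g' || is_top h' then FTop
      else if is_bot g' then h'
      else if is_bot h' then g'
      else FOr g' h'
  | FImp g h =>
      let g' := simp g in let h' := simp h in
      if is_bot g' || is_top h' then FTop
      else if is_top g' then h'
      else FImp g' h'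
  | FAll y g => FAll y (simp g)
  | FEx y g => FEx y (simp g)
  | _ => f
  end.

Definition pos_weakly_restricted {C P} (x : nat) (G : form C P) : Prop :=
  is_top (simp (repl x G)) = true.
Definition neg_weakly_restricted {C P} (x : nat) (G : form C P) : Prop :=
  is_bot (simp (repl x G)) = true.

(* every occurrence of x in f (which occurs with polarity pol, true = positive)
   belongs to a subformula H (with its polarity) satisfying cond *)
Fixpoint occ_covered {C P} (cond : bool -> form C P -> Prop) (x : nat) (pol : bool)
  (f : form C P) : Prop :=
  cond pol f \/
  match f with
  | FBot => True
  | FAtom _ ts => existsb (term_hasb x) ts = false
  | FEq t1 t2 => term_hasb x t1 = false /\ term_hasb x t2 = false
  | FAnd g h | FOr g h => occ_covered cond x pol g /\ occ_covered cond x pol h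
  | FImp g h => occ_covered cond x (negb pol) g /\ occ_covered cond x pol h
  | FAll _ g | FEx _ g => occ_covered cond x pol g
  end.

Definition semi_safe_decomp {C P} (pre : list (quant * nat)) (M : form C P) : Prop :=
  qfree M /\ NoDup (map snd pre) /\
  forall x, In x (map snd pre) -> sp_restricted x M.

Definition semi_safe {C P} (F : form C P) : Prop :=
  sentence F /\ exists pre M, F = prenex pre M /\ semi_safe_decomp pre M.

Definition safe {C P} (F : form C P) : Prop :=
  sentence F /\
  exists pre M, F = prenex pre M /\ semi_safe_decomp pre M /\
    (forall x, In (QAll, x) pre ->
       occ_covered (fun pol H => (pol = true /\ pos_weakly_restricted x H) \/
                                 (pol = false /\ neg_weakly_restricted x H)) x true M) /\
    (forall x, In (QEx, x) pre ->
       occ_covered (fun pol H => (pol = false /\ pos_weakly_restricted x H) \/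
                                 (pol = true /\ neg_weakly_restricted x H)) x true M).

From Stdlib Require Import List Arith Bool Lia Classical FunctionalExtensionality.
Import ListNotations.

(* Under SPP every predicate holds only of tuples of named elements, i.e. of
   values of constants of F.  Safety makes SM[F] blind to the unnamed
   elements: moving a universally quantified variable to an unnamed value
   keeps F and F*(u) true, and dually for existential variables, because every
   occurrence of the variable lies in a subformula that collapses to top or
   bottom once its restricted atoms are false.  Hence two structures
   satisfying SPP that agree on the ground atoms over c(F) (equalities between
   constants, atoms with constant arguments) agree on SM[F]: F and F*(u) are
   transferred along the partial bijection given by the constants.
   Semi-safety also shows that SM[F] implies SPP.  So G can be taken to be the
   disjunction of the complete descriptions of the ground atoms that are
   realised in some stable model. *)

Lemma upd_same {D} (env : nat -> D) x d : upd env x d x = d.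
Proof. unfold upd. now rewrite Nat.eqb_refl. Qed.

Lemma upd_comm {D} (env : nat -> D) x y a b : x <> y ->
  upd (upd env x a) y b = upd (upd env y b) x a.
Proof.
  intros Hxy. apply functional_extensionality; intro v. unfold upd.
  destruct (Nat.eqb_spec v y), (Nat.eqb_spec v x); congruence.
Qed.

Lemma term_val_upd_notin {C D} (ic : C -> D) env x a b t : term_hasb x t = false ->
  term_val ic (upd env x a) t = term_val ic (upd env x b) t.
Proof. destruct t as [y|c]; cbn; auto. intros H. unfold upd. now rewrite H. Qed.

Lemma term_val_env {C D} (ic : C -> D) env1 env2 t :
  (forall x, term_hasb x t = true -> env1 x = env2 x) -> term_val ic env1 t = term_val ic env2 t.
Proof. destruct t as [y|c]; cbn; auto. intros H. apply H. cbn. apply Nat.eqb_refl. Qed.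

Lemma existsb_false_In {A} (f : A -> bool) l a : existsb f l = false -> In a l -> f a = false.
Proof.
  intros H Ha. destruct (f a) eqn:E; auto.
  assert (existsb f l = true) by (apply existsb_exists; eauto). congruence.
Qed.

Lemma is_top_eq {C P} (g : form C P) : is_top g = true -> g = FTop.
Proof. destruct g; try discriminate; destruct g1, g2; try discriminate; reflexivity. Qed.

Lemma is_bot_eq {C P} (g : form C P) : is_bot g = true -> g = FBot.
Proof. destruct g; try discriminate; reflexivity. Qed.

Lemma prenex_preds {C P} (M : form C P) pre : preds (prenex pre M) = preds M.
Proof. induction pre as [|[[|] y] pre IH]; cbn; auto. Qed.

Lemma prenex_consts {C P} (M : form C P) pre : consts (prenex pre M) = consts M.
Proof. induction pre as [|[[|] y] pre IH]; cbn; auto. Qed.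

Lemma prenex_wf {C P} ar (M : form C P) pre : wf ar (prenex pre M) -> wf ar M.
Proof. induction pre as [|[[|] y] pre IH]; cbn; auto. Qed.

Lemma free_in_prenex {C P} (M : form C P) x pre : ~ In x (map snd pre) -> free_in x M ->
  free_in x (prenex pre M).
Proof. induction pre as [|[[|] y] pre IH]; cbn; intros Hx Hf; auto; split; auto. Qed.

Lemma sp_restricted_not_free {C P} x (f : form C P) :
  qfree f -> ~ free_in x f -> sp_restricted x f.
Proof.
  induction f; cbn; intros Hq Hf; try tauto.
  - destruct (existsb (term_hasb x) ts); tauto.
  - destruct (term_hasb x t1), (term_hasb x t2); tauto.
Qed.

Fixpoint wf_over {C P} (ar : P -> nat) (ps : list P) (f : form C P) : Prop :=
  match f with
  | FAtom p ts => In p ps /\ length ts = ar p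
  | FAnd g h | FOr g h | FImp g h => wf_over ar ps g /\ wf_over ar ps h
  | FAll _ g | FEx _ g => wf_over ar ps g
  | _ => True
  end.

Lemma wf_over_preds {C P} ar (f : form C P) : wf ar f -> wf_over ar (preds f) f.
Proof.
  enough (H : forall ps, wf ar f -> incl (preds f) ps -> wf_over ar ps f)
    by (intros; apply H; auto using incl_refl).
  induction f; cbn; intros ps Hw Hp; auto;
    try (apply incl_app_inv in Hp; split; [apply IHf1|apply IHf2]; tauto).
  split; auto. apply Hp; now left.
Qed.

Lemma wf_over_repl {C P} ar ps x (f : form C P) : wf_over ar ps f -> wf_over ar ps (repl x f).
Proof.
  induction f; cbn [repl wf_over]; intros; try tauto;
    match goal with |- context [if ?b then _ else _] => destruct b end; cbn; auto.
Qed.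

Section HereThere.
Context {C P D : Type} (ic : C -> D).

(* Truth of [F*(U)] in the structure [ip] (see [sat_star]): [U] interprets
   the atoms, [ip] the classical copy of each implication. *)
Fixpoint sat_ht (ip U : P -> list D -> Prop) (env : nat -> D) (f : form C P) : Prop :=
  match f with
  | FBot => False
  | FAtom p ts => U p (map (term_val ic env) ts)
  | FEq t1 t2 => term_val ic env t1 = term_val ic env t2
  | FAnd g h => sat_ht ip U env g /\ sat_ht ip U env h
  | FOr g h => sat_ht ip U env g \/ sat_ht ip U env h
  | FImp g h => (sat_ht ip U env g -> sat_ht ip U env h) /\ (sat ic ip env g -> sat ic ip env h)
  | FAll x g => forall d, sat_ht ip U (upd env x d) g
  | FEx x g => exists d, sat_ht ip U (upd env x d) g
  end.

Lemma sat_ht_refl (ip : P -> list D -> Prop) (f : form C P) env :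
  sat_ht ip ip env f <-> sat ic ip env f.
Proof.
  revert env; induction f; intro env; cbn; try tauto;
    try (specialize (IHf1 env); specialize (IHf2 env); tauto).
  - split; intros H d; apply IHf, H.
  - split; intros [d H]; exists d; apply IHf, H.
Qed.

Lemma sat_lift_inl (ip U : P -> list D -> Prop) (f : form C P) env :
  sat ic (pcombine ip U) env (lift inl f) <-> sat ic ip env f.
Proof.
  revert env; induction f; intro env; cbn; try tauto;
    try (specialize (IHf1 env); specialize (IHf2 env); tauto).
  - split; intros H d; apply IHf, H.
  - split; intros [d H]; exists d; apply IHf, H.
Qed.

Lemma sat_star (ip U : P -> list D -> Prop) (f : form C P) env :
  sat ic (pcombine ip U) env (star f) <-> sat_ht ip U env f.
Proof.
  revert env; induction f; intro env; cbn; try tauto;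
    try (specialize (IHf1 env); specialize (IHf2 env); tauto).
  - specialize (IHf1 env); specialize (IHf2 env).
    rewrite !sat_lift_inl; tauto.
  - split; intros H d; apply IHf, H.
  - split; intros [d H]; exists d; apply IHf, H.
Qed.

Lemma sat_ht_env (ip U : P -> list D -> Prop) (f : form C P) env1 env2 :
  (forall x, free_in x f -> env1 x = env2 x) ->
  sat_ht ip U env1 f <-> sat_ht ip U env2 f.
Proof.
  pose proof (term_val_env ic) as Ht.
  revert U env1 env2; induction f; intros U env1 env2 H; cbn in *; try tauto.
  - replace (map (term_val ic env1) ts) with (map (term_val ic env2) ts); [tauto|].
    apply map_ext_in. intros t Ht'. symmetry. apply Ht. intros x Hx. apply H.
    apply existsb_exists. eauto.
  - rewrite (Ht env1 env2 t1), (Ht env1 env2 t2); [tauto| |]; intros; apply H; auto.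
  - rewrite (IHf1 U env1 env2), (IHf2 U env1 env2); [tauto| |]; intros; apply H; auto.
  - rewrite (IHf1 U env1 env2), (IHf2 U env1 env2); [tauto| |]; intros; apply H; auto.
  - rewrite (IHf1 U env1 env2), (IHf2 U env1 env2), <- !sat_ht_refl,
      (IHf1 ip env1 env2), (IHf2 ip env1 env2); [tauto| | | |]; intros; apply H; auto.
  - assert (E : forall d, sat_ht ip U (upd env1 x d) f <-> sat_ht ip U (upd env2 x d) f).
    { intro d. apply IHf. intros v Hv; unfold upd; destruct (Nat.eqb_spec v x); auto. }
    split; intros H' d; apply E; auto.
  - assert (E : forall d, sat_ht ip U (upd env1 x d) f <-> sat_ht ip U (upd env2 x d) f).
    { intro d. apply IHf. intros v Hv; unfold upd; destruct (Nat.eqb_spec v x); auto. }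
    split; intros [d H']; exists d; apply E; auto.
Qed.

Lemma sat_ht_sentence (ip U : P -> list D -> Prop) (f : form C P) env1 env2 : sentence f ->
  sat_ht ip U env1 f <-> sat_ht ip U env2 f.
Proof. intros Hs. apply sat_ht_env. intros x Hx. now destruct (Hs x). Qed.

End HereThere.

Definition cover_all {C P} (x : nat) : bool -> form C P -> Prop :=
  fun pol H => (pol = true /\ pos_weakly_restricted x H) \/
               (pol = false /\ neg_weakly_restricted x H).

Definition cover_ex {C P} (x : nat) : bool -> form C P -> Prop :=
  fun pol H => (pol = false /\ pos_weakly_restricted x H) \/
               (pol = true /\ neg_weakly_restricted x H).

Lemma occ_covered_ex_all {C P} x (f : form C P) pol :
  occ_covered (cover_ex x) x pol f -> occ_covered (cover_all x) x (negb pol) f.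
Proof.
  assert (Hc : forall b H, @cover_ex C P x b H -> cover_all x (negb b) H).
  { unfold cover_ex, cover_all. intros [|] H; cbn; intuition discriminate. }
  revert pol; induction f; intros pol [H|H]; try (left; now apply Hc); right; cbn in *;
    try tauto; try (split; [apply IHf1|apply IHf2]; tauto); auto.
Qed.

Section Support.
Context {C P D : Type} (ar : P -> nat) (ps : list P) (cs : list C) (ic : C -> D).

Definition named (d : D) : Prop := exists c, In c cs /\ d = ic c.

Definition supported (K : P -> list D -> Prop) : Prop :=
  forall p ds, In p ps -> length ds = ar p -> K p ds -> forall d, In d ds -> named d.

Definition interp_le (U K : P -> list D -> Prop) : Prop :=
  forall p, In p ps -> forall ds, length ds = ar p -> U p ds -> K p ds.

Definition interp_eq (U K : P -> list D -> Prop) : Prop :=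
  forall p, In p ps -> forall ds, length ds = ar p -> (U p ds <-> K p ds).

Lemma interp_le_refl K : interp_le K K.
Proof. unfold interp_le; auto. Qed.

Lemma supported_le U K : supported K -> interp_le U K -> supported U.
Proof. unfold supported, interp_le; eauto. Qed.

Lemma named_tuple ds :
  (forall d, In d ds -> named d) -> exists cl, incl cl cs /\ ds = map ic cl.
Proof.
  induction ds as [|d ds IH]; intros Hn.
  - exists []. split; auto. intros ? [].
  - destruct IH as [cl [Hcl ->]]; [intros; apply Hn; now right|].
    destruct (Hn d (or_introl eq_refl)) as [c [Hc ->]].
    exists (c :: cl). split; auto. intros c' [<-|Hc']; auto.
Qed.

Lemma sat_ht_sat ip U (f : form C P) env : interp_le U ip -> wf_over ar ps f ->
  sat_ht ic ip U env f -> sat ic ip env f.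
Proof.
  intros HU. revert env; induction f; intros env Hok; cbn in *; try tauto.
  - intros H. destruct Hok as [Hp Hl]. apply HU; auto. now rewrite length_map.
  - intros [? ?]; split; [apply IHf1|apply IHf2]; tauto.
  - intros [?|?]; [left; apply IHf1|right; apply IHf2]; tauto.
  - intros H d; apply IHf; auto.
  - intros [d H]; exists d; apply IHf; auto.
Qed.

Lemma restricted_unnamed_false J K (f : form C P) env x : supported K ->
  wf_over ar ps f -> incl (consts f) cs -> RV f x = true -> ~ named (env x) ->
  ~ sat_ht ic J K env f.
Proof.
  intros HK. induction f as [| | | | | |y f IHf|y f IHf]; intros Hok Hc Hrv Hn;
    cbn in *; try discriminate.
  - intros H. apply Hn. destruct Hok as [Hp Hl].
    apply existsb_exists in Hrv. destruct Hrv as [[y|c] [Ht Hx]]; cbn in Hx; try discriminate.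
    apply Nat.eqb_eq in Hx; subst.
    apply (HK p (map (term_val ic env) ts)); auto.
    + now rewrite length_map.
    + change (env x) with (term_val ic env (Var x)). now apply in_map.
  - destruct t1 as [a|c], t2 as [b|c']; cbn in *; try discriminate.
    + rewrite orb_false_r in Hrv. apply Nat.eqb_eq in Hrv; subst. intros E; apply Hn.
      exists c'. split; auto. apply Hc; now left.
    + apply Nat.eqb_eq in Hrv; subst. intros E; apply Hn.
      exists c. split; auto. apply Hc; now left.
  - apply incl_app_inv in Hc. apply orb_true_iff in Hrv.
    intros [H1 H2]. destruct Hrv; [eapply IHf1|eapply IHf2]; eauto; tauto.
  - apply incl_app_inv in Hc. apply andb_true_iff in Hrv.
    intros [H1|H2]; [eapply IHf1|eapply IHf2]; eauto; tauto.
Qed.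

Local Ltac constant_case b :=
  let E := fresh "E" in
  destruct b eqn:E;
  [ first [apply is_bot_eq in E | apply is_top_eq in E]; rewrite E in *; cbn in *; tauto | ].

Lemma sat_ht_simp ip U (f : form C P) env : interp_le U ip -> wf_over ar ps f ->
  sat_ht ic ip U env (simp f) <-> sat_ht ic ip U env f.
Proof.
  revert U env; induction f; intros U env HU Hok; cbn [wf_over] in Hok; try (cbn; tauto).
  - destruct Hok as [Ho1 Ho2].
    pose proof (IHf1 U env HU Ho1) as I1. pose proof (IHf2 U env HU Ho2) as I2.
    cbn [simp]. constant_case (is_bot (simp f1)). constant_case (is_bot (simp f2)).
    cbn [orb]. constant_case (is_top (simp f1)). constant_case (is_top (simp f2)).
    cbn in *; tauto.
  - destruct Hok as [Ho1 Ho2].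
    pose proof (IHf1 U env HU Ho1) as I1. pose proof (IHf2 U env HU Ho2) as I2.
    cbn [simp]. constant_case (is_top (simp f1)). constant_case (is_top (simp f2)).
    cbn [orb]. constant_case (is_bot (simp f1)). constant_case (is_bot (simp f2)).
    cbn in *; tauto.
  - destruct Hok as [Ho1 Ho2].
    pose proof (IHf1 U env HU Ho1) as I1. pose proof (IHf2 U env HU Ho2) as I2.
    pose proof (IHf1 ip env (interp_le_refl ip) Ho1) as J1.
    pose proof (IHf2 ip env (interp_le_refl ip) Ho2) as J2.
    rewrite !sat_ht_refl in J1, J2.
    pose proof (sat_ht_sat ip U f2 env HU Ho2) as Hthere.
    cbn [simp]. constant_case (is_bot (simp f1)). constant_case (is_top (simp f2)).
    cbn [orb]. constant_case (is_top (simp f1)).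
    cbn in *; tauto.
  - cbn. split; intros H d; apply IHf; auto.
  - cbn. split; intros [d H]; exists d; apply IHf; auto.
Qed.

Lemma sat_ht_repl ip U (f : form C P) env x : supported ip -> interp_le U ip ->
  qfree f -> wf_over ar ps f -> incl (consts f) cs -> ~ named (env x) ->
  sat_ht ic ip U env (repl x f) <-> sat_ht ic ip U env f.
Proof.
  intros Hip. revert U.
  induction f as [| | | | | |y f IHf|y f IHf]; intros U HU Hq Hok Hc Hn;
    cbn [qfree wf_over consts] in *; try tauto.
  - cbn [repl]. destruct (RV (FAtom p ts) x) eqn:E; [|tauto].
    split; [cbn; tauto|]. intros H.
    exact (restricted_unnamed_false ip U (FAtom p ts) env x (supported_le U ip Hip HU)
             Hok Hc E Hn H).
  - cbn [repl]. destruct (RV (@FEq C P t1 t2) x) eqn:E; [|tauto].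
    split; [cbn; tauto|]. intros H.
    exact (restricted_unnamed_false ip U (FEq t1 t2) env x (supported_le U ip Hip HU)
             Hok Hc E Hn H).
  - apply incl_app_inv in Hc. cbn. rewrite IHf1, IHf2; tauto.
  - apply incl_app_inv in Hc. cbn. rewrite IHf1, IHf2; tauto.
  - apply incl_app_inv in Hc. cbn. rewrite <- !sat_ht_refl.
    rewrite (IHf1 U), (IHf2 U), (IHf1 ip), (IHf2 ip); auto using interp_le_refl; tauto.
Qed.

Lemma pos_weakly_restricted_sat ip U (f : form C P) env x : supported ip -> interp_le U ip ->
  qfree f -> wf_over ar ps f -> incl (consts f) cs -> ~ named (env x) ->
  pos_weakly_restricted x f -> sat_ht ic ip U env f.
Proof.
  intros Hip HU Hq Hok Hc Hn Hp. apply is_top_eq in Hp.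
  apply (sat_ht_repl ip U f env x); auto.
  apply (sat_ht_simp ip U (repl x f) env HU (wf_over_repl ar ps x f Hok)).
  rewrite Hp. cbn. tauto.
Qed.

Lemma neg_weakly_restricted_unsat ip U (f : form C P) env x : supported ip -> interp_le U ip ->
  qfree f -> wf_over ar ps f -> incl (consts f) cs -> ~ named (env x) ->
  neg_weakly_restricted x f -> ~ sat_ht ic ip U env f.
Proof.
  intros Hip HU Hq Hok Hc Hn Hp H. apply is_bot_eq in Hp.
  apply (sat_ht_repl ip U f env x) in H; auto.
  apply (sat_ht_simp ip U (repl x f) env HU (wf_over_repl ar ps x f Hok)) in H.
  now rewrite Hp in H.
Qed.

(* Moving [x] from any value to an unnamed one preserves truth of positive and
   falsity of negative subformulas: at a covering subformula this is forced by
   weak restriction, and elsewhere [x] does not occur. *)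
Lemma sat_ht_move_unnamed ip U (f : form C P) x pol env a d :
  supported ip -> interp_le U ip -> qfree f -> wf_over ar ps f -> incl (consts f) cs ->
  occ_covered (cover_all x) x pol f -> ~ named d ->
  if pol then (sat_ht ic ip U (upd env x a) f -> sat_ht ic ip U (upd env x d) f)
  else (sat_ht ic ip U (upd env x d) f -> sat_ht ic ip U (upd env x a) f).
Proof.
  intros Hip. revert U pol.
  induction f; intros U pol HU Hq Hok Hc Hocc Hd;
    (destruct Hocc as [[[-> Hp]|[-> Hp]]|Hocc];
     [ intros _; eapply pos_weakly_restricted_sat; eauto; now rewrite upd_same
     | intros H; exfalso; eapply neg_weakly_restricted_unsat; eauto; now rewrite upd_same
     | ]);
    cbn [qfree wf_over consts] in *.
  - destruct pol; auto.
  - assert (E : map (term_val ic (upd env x a)) ts = map (term_val ic (upd env x d)) ts).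
    { apply map_ext_in. intros t Ht. apply term_val_upd_notin. eapply existsb_false_In; eauto. }
    cbn. rewrite E. destruct pol; auto.
  - cbn. rewrite (term_val_upd_notin ic env x a d t1), (term_val_upd_notin ic env x a d t2)
      by tauto.
    destruct pol; auto.
  - apply incl_app_inv in Hc.
    pose proof (IHf1 U pol HU ltac:(tauto) ltac:(tauto) ltac:(tauto) ltac:(tauto) Hd).
    pose proof (IHf2 U pol HU ltac:(tauto) ltac:(tauto) ltac:(tauto) ltac:(tauto) Hd).
    destruct pol; cbn in *; tauto.
  - apply incl_app_inv in Hc.
    pose proof (IHf1 U pol HU ltac:(tauto) ltac:(tauto) ltac:(tauto) ltac:(tauto) Hd).
    pose proof (IHf2 U pol HU ltac:(tauto) ltac:(tauto) ltac:(tauto) ltac:(tauto) Hd).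
    destruct pol; cbn in *; tauto.
  - apply incl_app_inv in Hc.
    pose proof (IHf1 U (negb pol) HU ltac:(tauto) ltac:(tauto) ltac:(tauto) ltac:(tauto) Hd).
    pose proof (IHf2 U pol HU ltac:(tauto) ltac:(tauto) ltac:(tauto) ltac:(tauto) Hd).
    pose proof (IHf1 ip (negb pol) (interp_le_refl ip)
                  ltac:(tauto) ltac:(tauto) ltac:(tauto) ltac:(tauto) Hd).
    pose proof (IHf2 ip pol (interp_le_refl ip)
                  ltac:(tauto) ltac:(tauto) ltac:(tauto) ltac:(tauto) Hd).
    destruct pol; cbn in *; rewrite !sat_ht_refl in *; tauto.
  - contradiction.
  - contradiction.
Qed.

Lemma sat_ht_prenex_move ip U (M : form C P) x a d pre : ~ In x (map snd pre) ->
  (forall env, sat_ht ic ip U (upd env x a) M -> sat_ht ic ip U (upd env x d) M) ->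
  forall env, sat_ht ic ip U (upd env x a) (prenex pre M) ->
              sat_ht ic ip U (upd env x d) (prenex pre M).
Proof.
  induction pre as [|[q y] pre IH]; intros Hx HM env; cbn [prenex]; auto.
  cbn in Hx. assert (Hxy : y <> x) by tauto.
  destruct q; cbn.
  - intros H e. rewrite upd_comm by auto. apply IH; auto. rewrite <- upd_comm by auto. apply H.
  - intros [e H]. exists e. rewrite upd_comm by auto. apply IH; auto.
    rewrite <- upd_comm by auto. apply H.
Qed.

Lemma sat_ht_forall_unnamed ip U (M : form C P) x pre env a d :
  supported ip -> interp_le U ip -> qfree M -> wf_over ar ps M -> incl (consts M) cs ->
  occ_covered (cover_all x) x true M -> ~ In x (map snd pre) -> ~ named d ->
  sat_ht ic ip U (upd env x a) (prenex pre M) -> sat_ht ic ip U (upd env x d) (prenex pre M).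
Proof.
  intros Hip HU Hq Hok Hc Hocc Hx Hd. apply sat_ht_prenex_move; auto.
  intros e. exact (sat_ht_move_unnamed ip U M x true e a d Hip HU Hq Hok Hc Hocc Hd).
Qed.

Lemma sat_ht_exists_unnamed ip U (M : form C P) x pre env a d :
  supported ip -> interp_le U ip -> qfree M -> wf_over ar ps M -> incl (consts M) cs ->
  occ_covered (cover_ex x) x true M -> ~ In x (map snd pre) -> ~ named d ->
  sat_ht ic ip U (upd env x d) (prenex pre M) -> sat_ht ic ip U (upd env x a) (prenex pre M).
Proof.
  intros Hip HU Hq Hok Hc Hocc Hx Hd. apply sat_ht_prenex_move; auto.
  intros e. apply occ_covered_ex_all in Hocc.
  exact (sat_ht_move_unnamed ip U M x false e a d Hip HU Hq Hok Hc Hocc Hd).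
Qed.

Definition named_part (K : P -> list D -> Prop) : P -> list D -> Prop :=
  fun p ds => K p ds /\ forall d, In d ds -> named d.

Lemma sat_ht_named_part ip (f : form C P) env :
  qfree f -> wf_over ar ps f -> incl (consts f) cs ->
  (forall x, ~ named (env x) -> sp_restricted x f) ->
  sat ic ip env f -> sat_ht ic ip (named_part ip) env f.
Proof.
  assert (HU : interp_le (named_part ip) ip) by (intros p _ ds _ [H _]; exact H).
  assert (Hs : supported (named_part ip)) by (intros p ds _ _ [_ H]; exact H).
  induction f; intros Hq Hok Hc Hsp; cbn [qfree wf_over consts] in *; try tauto.
  - intros H. split; auto. intros d Hd. apply in_map_iff in Hd. destruct Hd as [[y|c] [<- Ht]].
    + apply NNPP. intros Hn. specialize (Hsp y Hn). cbn in Hsp.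
      apply (existsb_false_In _ _ _ Hsp) in Ht. cbn in Ht. now rewrite Nat.eqb_refl in Ht.
    + exists c. split; auto. apply Hc. apply in_flat_map. exists (Cst c). cbn; auto.
  - apply incl_app_inv in Hc. intros [G1 G2]. cbn.
    split; [apply IHf1|apply IHf2]; try tauto; intros x Hx; apply (Hsp x Hx).
  - apply incl_app_inv in Hc. intros [G1|G2]; cbn; [left; apply IHf1|right; apply IHf2];
      try tauto; intros x Hx; apply (Hsp x Hx).
  - apply incl_app_inv in Hc. intros H. cbn. split; auto.
    intros H1. apply IHf2; try tauto.
    + intros x Hx. destruct (Hsp x Hx) as [Hr|Hr]; auto. exfalso.
      eapply (restricted_unnamed_false ip (named_part ip) f1 env x Hs); eauto; tauto.
    + apply H. eapply sat_ht_sat; eauto; tauto.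
Qed.

Lemma sat_ht_named_part_prenex ip (M : form C P) pre env :
  qfree M -> wf_over ar ps M -> incl (consts M) cs -> (forall x, sp_restricted x M) ->
  sat ic ip env (prenex pre M) -> sat_ht ic ip (named_part ip) env (prenex pre M).
Proof.
  intros Hq Hok Hc Hsp. revert env.
  induction pre as [|[[|] y] pre IH]; intros env; cbn [prenex].
  - apply sat_ht_named_part; auto.
  - cbn. intros H d. apply IH, H.
  - cbn. intros [d H]. exists d. apply IH, H.
Qed.

End Support.

Definition interp_corr {P D1 D2} (ar : P -> nat) (ps : list P) (R : D1 -> D2 -> Prop)
  (K1 : P -> list D1 -> Prop) (K2 : P -> list D2 -> Prop) : Prop :=
  forall p ds1 ds2, In p ps -> length ds1 = ar p -> Forall2 R ds1 ds2 ->
    (K1 p ds1 <-> K2 p ds2).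

Lemma interp_corr_flip {P D1 D2} ar ps (R : D1 -> D2 -> Prop) K1 K2 :
  interp_corr ar ps R K1 K2 -> @interp_corr P D2 D1 ar ps (fun a b => R b a) K2 K1.
Proof.
  intros H p ds2 ds1 Hp Hl HR. apply Forall2_flip in HR.
  symmetry. apply H; auto. now rewrite (Forall2_length HR).
Qed.

Section Transfer.
Context {C P D1 D2 : Type} (ar : P -> nat) (ps : list P) (cs : list C)
  (ic1 : C -> D1) (ic2 : C -> D2) (R : D1 -> D2 -> Prop).
Hypothesis R_eq : forall a1 a2 b1 b2, R a1 a2 -> R b1 b2 -> (a1 = b1 <-> a2 = b2).
Hypothesis R_const : forall c, In c cs -> R (ic1 c) (ic2 c).

Lemma term_val_corr env1 env2 t : (forall v, R (env1 v) (env2 v)) ->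
  incl (term_consts t) cs -> R (term_val ic1 env1 t) (term_val ic2 env2 t).
Proof. destruct t as [y|c]; cbn; auto. intros _ H. apply R_const, H. now left. Qed.

Lemma terms_val_corr env1 env2 ts : (forall v, R (env1 v) (env2 v)) ->
  incl (flat_map term_consts ts) cs ->
  Forall2 R (map (term_val ic1 env1) ts) (map (term_val ic2 env2) ts).
Proof.
  intros He. induction ts as [|t ts IH]; cbn; intros Hc; constructor.
  - apply term_val_corr; auto. intros c Hc'. apply Hc, in_or_app; auto.
  - apply IH. intros c Hc'. apply Hc, in_or_app; auto.
Qed.

Lemma upd_corr (env1 : nat -> D1) env2 x a b : (forall v, R (env1 v) (env2 v)) -> R a b ->
  forall v, R (upd env1 x a v) (upd env2 x b v).
Proof. intros H Hab v. unfold upd. destruct (Nat.eqb v x); auto. Qed.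

Lemma sat_ht_corr_qfree (f : form C P) ip1 ip2 K1 K2 env1 env2 :
  qfree f -> wf_over ar ps f -> incl (consts f) cs ->
  interp_corr ar ps R ip1 ip2 -> interp_corr ar ps R K1 K2 ->
  (forall v, R (env1 v) (env2 v)) ->
  sat_ht ic1 ip1 K1 env1 f <-> sat_ht ic2 ip2 K2 env2 f.
Proof.
  intros Hq Hok Hc Hip. revert K1 K2 Hq Hok Hc.
  induction f as [| | | | | |y f IHf|y f IHf]; intros K1 K2 Hq Hok Hc HK He;
    cbn [qfree wf_over consts] in *; try contradiction; cbn.
  - tauto.
  - destruct Hok as [Hp Hl]. apply HK; auto.
    + now rewrite length_map.
    + now apply terms_val_corr.
  - apply incl_app_inv in Hc. apply R_eq; apply term_val_corr; tauto.
  - apply incl_app_inv in Hc. rewrite (IHf1 K1 K2), (IHf2 K1 K2); tauto.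
  - apply incl_app_inv in Hc. rewrite (IHf1 K1 K2), (IHf2 K1 K2); tauto.
  - apply incl_app_inv in Hc. rewrite <- !sat_ht_refl.
    rewrite (IHf1 K1 K2), (IHf2 K1 K2), (IHf1 ip1 ip2), (IHf2 ip1 ip2); tauto.
Qed.

(* A named value of a quantified variable is matched through its name; an
   unnamed one is traded, using the safety of the variable, for the related
   values [env1 0] and [env2 0]. *)
Lemma sat_ht_corr_prenex (M : form C P) ip1 ip2 U1 U2 pre env1 env2 :
  qfree M -> wf_over ar ps M -> incl (consts M) cs ->
  supported ar ps cs ic1 ip1 -> supported ar ps cs ic2 ip2 ->
  interp_le ar ps U1 ip1 -> interp_le ar ps U2 ip2 ->
  interp_corr ar ps R ip1 ip2 -> interp_corr ar ps R U1 U2 ->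
  NoDup (map snd pre) ->
  (forall x, In (QAll, x) pre -> occ_covered (cover_all x) x true M) ->
  (forall x, In (QEx, x) pre -> occ_covered (cover_ex x) x true M) ->
  (forall v, R (env1 v) (env2 v)) ->
  sat_ht ic1 ip1 U1 env1 (prenex pre M) -> sat_ht ic2 ip2 U2 env2 (prenex pre M).
Proof.
  intros Hq Hok Hc Hs1 Hs2 HU1 HU2 Hip HU.
  revert env1 env2. induction pre as [|[q x] pre IH]; intros env1 env2 Hnd HA HE He;
    cbn [prenex].
  - apply sat_ht_corr_qfree; auto.
  - cbn in Hnd. apply NoDup_cons_iff in Hnd. destruct Hnd as [Hx Hnd].
    assert (HA' : forall y, In (QAll, y) pre -> occ_covered (cover_all y) y true M)
      by auto with datatypes.
    assert (HE' : forall y, In (QEx, y) pre -> occ_covered (cover_ex y) y true M)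
      by auto with datatypes.
    specialize (fun e1 e2 => IH e1 e2 Hnd HA' HE').
    destruct q; cbn.
    + intros H d2. destruct (classic (named cs ic2 d2)) as [[c [Hc' ->]]|Hn].
      * apply (IH (upd env1 x (ic1 c))); [apply upd_corr; auto|apply H].
      * apply (sat_ht_forall_unnamed ar ps cs ic2 ip2 U2 M x pre env2 (env2 0) d2
                 Hs2 HU2 Hq Hok Hc (HA x (or_introl eq_refl)) Hx Hn).
        apply (IH (upd env1 x (env1 0))); [apply upd_corr; auto|apply H].
    + intros [d1 H]. destruct (classic (named cs ic1 d1)) as [[c [Hc' ->]]|Hn].
      * exists (ic2 c). apply (IH (upd env1 x (ic1 c))); [apply upd_corr; auto|apply H].
      * exists (env2 0). apply (IH (upd env1 x (env1 0))); [apply upd_corr; auto|].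
        apply (sat_ht_exists_unnamed ar ps cs ic1 ip1 U1 M x pre env1 (env1 0) d1
                 Hs1 HU1 Hq Hok Hc (HE x (or_introl eq_refl)) Hx Hn H).
Qed.

End Transfer.

Section SPPSemantics.
Context {C P D : Type} (ic : C -> D) (ip : P -> list D -> Prop).

Lemma sat_bigand env (l : list (form C P)) :
  sat ic ip env (bigand l) <-> forall f, In f l -> sat ic ip env f.
Proof.
  induction l as [|f l IH]; cbn.
  - split; [tauto|intros _ H; exact H].
  - rewrite IH. split; [intros [H1 H2] g [<-|Hg]; auto|intros H; split; auto].
Qed.

Lemma sat_bigor env (l : list (form C P)) :
  sat ic ip env (bigor l) <-> exists f, In f l /\ sat ic ip env f.
Proof.
  induction l as [|f l IH]; cbn.
  - split; [tauto|intros [f [[] _]]].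
  - rewrite IH. split.
    + intros [H|[g [Hg H]]]; eauto.
    + intros [g [[<-|Hg] H]]; eauto.
Qed.

Lemma sat_in_c env cs xs : sat ic ip env (@in_c C P cs xs) <->
  forall x, In x xs -> exists c, In c cs /\ env x = ic c.
Proof.
  unfold in_c. rewrite sat_bigand. split.
  - intros H x Hx. specialize (H _ (in_map _ _ _ Hx)). apply sat_bigor in H.
    destruct H as [f [Hf H]]. apply in_map_iff in Hf. destruct Hf as [c [<- Hc]].
    exists c; split; auto.
  - intros H f Hf. apply in_map_iff in Hf. destruct Hf as [x [<- Hx]].
    apply sat_bigor. destruct (H x Hx) as [c [Hc E]].
    exists (FEq (Var x) (Cst c)). split; auto. apply in_map_iff. eauto.
Qed.

Fixpoint updl (env : nat -> D) (k : nat) (ds : list D) : nat -> D :=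
  match ds with [] => env | d :: ds => updl (upd env k d) (S k) ds end.

Lemma updl_lt ds env k v : v < k -> updl env k ds v = env v.
Proof.
  revert env k. induction ds as [|d ds IH]; cbn; intros env k Hv; auto.
  rewrite IH by lia. unfold upd. destruct (Nat.eqb_spec v k); auto; lia.
Qed.

Lemma updl_seq ds env k : map (updl env k ds) (seq k (length ds)) = ds.
Proof.
  revert env k. induction ds as [|d ds IH]; cbn; intros env k; auto.
  rewrite IH, updl_lt by lia. now rewrite upd_same.
Qed.

Lemma sat_forall_list_seq n k env (body : form C P) :
  sat ic ip env (forall_list (seq k n) body) <->
  forall ds, length ds = n -> sat ic ip (updl env k ds) body.
Proof.
  revert k env. induction n as [|n IH]; intros k env; cbn.
  - split; [intros H [|d ds] Hl; cbn in *; auto; discriminate|intros H; apply (H [])]; auto.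
  - split.
    + intros H [|d ds] Hl; cbn in Hl; try discriminate. cbn. apply IH; auto.
    + intros H d. apply IH. intros ds Hl. apply (H (d :: ds)). cbn; auto.
Qed.

Lemma sat_SPP ar cs ps env : sat ic ip env (SPP ar cs ps) <-> supported ar ps cs ic ip.
Proof.
  unfold SPP. rewrite sat_bigand. split.
  - intros H p ds Hp Hl Hip d Hd.
    specialize (H _ (in_map _ _ _ Hp)). cbv beta in H. rewrite sat_forall_list_seq in H.
    specialize (H ds Hl). cbn [sat] in H.
    rewrite map_map in H. cbn [term_val] in H. rewrite <- Hl, updl_seq in H.
    specialize (H Hip). rewrite sat_in_c in H.
    rewrite <- (updl_seq ds env 0) in Hd. apply in_map_iff in Hd. destruct Hd as [x [<- Hx]].
    destruct (H x Hx) as [c [Hc E]]. exists c; auto.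
  - intros H f Hf. apply in_map_iff in Hf. destruct Hf as [p [<- Hp]].
    rewrite sat_forall_list_seq. intros ds Hl. cbn [sat].
    rewrite map_map. cbn [term_val]. rewrite <- Hl, updl_seq. intros Hip.
    rewrite sat_in_c. intros x Hx.
    assert (Hin : In (updl env 0 ds x) ds).
    { rewrite <- (updl_seq ds env 0) at 2. now apply in_map. }
    destruct (H p ds Hp Hl Hip _ Hin) as [c [Hc E]]. eauto.
Qed.

End SPPSemantics.

Fixpoint tuples {A} (l : list A) (n : nat) : list (list A) :=
  match n with
  | 0 => [[]]
  | S n => flat_map (fun a => map (cons a) (tuples l n)) l
  end.

Lemma tuples_complete {A} (l : list A) n t : length t = n -> incl t l -> In t (tuples l n).
Proof.
  revert t. induction n as [|n IH]; intros [|a t] Hn Ht; cbn in *; try discriminate; auto.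
  apply in_flat_map. exists a. split; [apply Ht; now left|].
  apply in_map, IH; [lia|]. intros b Hb; apply Ht; now right.
Qed.

Lemma tuples_length {A} (l : list A) n t : In t (tuples l n) -> length t = n.
Proof.
  revert t. induction n as [|n IH]; intros t H; cbn in *.
  - destruct H as [<-|[]]; auto.
  - apply in_flat_map in H. destruct H as [a [_ H]]. apply in_map_iff in H.
    destruct H as [t' [<- H]]. cbn. f_equal. auto.
Qed.

Lemma classical_filter {A} (Q : A -> Prop) (l : list A) :
  exists l', forall a, In a l' <-> In a l /\ Q a.
Proof.
  induction l as [|a l [l' H]].
  - exists []. cbn. tauto.
  - destruct (classic (Q a)) as [Ha|Ha]; [exists (a :: l')|exists l']; intros b; cbn;
      rewrite H; intuition congruence.
Qed.

Definition ground_atoms {C P} (ar : P -> nat) (cs : list C) (ps : list P) : list (form C P) :=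
  map (fun cc => FEq (Cst (fst cc)) (Cst (snd cc))) (list_prod cs cs) ++
  flat_map (fun p => map (fun cl => FAtom p (map Cst cl)) (tuples cs (ar p))) ps.

Lemma ground_atoms_wf {C P} ar (cs : list C) (ps : list P) A :
  In A (ground_atoms ar cs ps) -> wf ar A /\ var_free A.
Proof.
  unfold ground_atoms. intros H. apply in_app_or in H. destruct H as [H|H].
  - apply in_map_iff in H. destruct H as [cc [<- _]]. cbn. auto.
  - apply in_flat_map in H. destruct H as [p [_ H]]. apply in_map_iff in H.
    destruct H as [cl [<- H]]. cbn. split.
    + rewrite length_map. eapply tuples_length; eauto.
    + clear. induction cl; cbn; auto.
Qed.

Lemma ground_eq_In {C P} ar (cs : list C) (ps : list P) c c' : In c cs -> In c' cs ->
  In (FEq (Cst c) (Cst c')) (ground_atoms ar cs ps).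
Proof.
  intros Hc Hc'. apply in_or_app. left. apply in_map_iff. exists (c, c').
  split; auto. now apply in_prod.
Qed.

Lemma ground_atom_In {C P} ar (cs : list C) (ps : list P) p cl :
  In p ps -> length cl = ar p -> incl cl cs ->
  In (FAtom p (map Cst cl)) (ground_atoms ar cs ps).
Proof.
  intros Hp Hl Hcl. apply in_or_app. right. apply in_flat_map. exists p. split; auto.
  apply in_map_iff. exists cl. split; auto. now apply tuples_complete.
Qed.

Fixpoint desc {C P} (L : list (form C P)) (s : list bool) : form C P :=
  match L, s with
  | A :: L', b :: s' => FAnd (if b then A else FImp A FBot) (desc L' s')
  | _, _ => FTop
  end.

Lemma desc_exists {C P D} (ic : C -> D) ip env (L : list (form C P)) :
  exists s, length s = length L /\ sat ic ip env (desc L s).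
Proof.
  induction L as [|A L [s [Hl Hs]]].
  - exists []. cbn. auto.
  - destruct (classic (sat ic ip env A)); [exists (true :: s)|exists (false :: s)]; cbn; auto.
Qed.

Lemma desc_agree {C P D1 D2} (ic1 : C -> D1) ip1 env1 (ic2 : C -> D2) ip2 env2
  (L : list (form C P)) s : length s = length L ->
  sat ic1 ip1 env1 (desc L s) -> sat ic2 ip2 env2 (desc L s) ->
  forall A, In A L -> (sat ic1 ip1 env1 A <-> sat ic2 ip2 env2 A).
Proof.
  revert s. induction L as [|B L IH]; intros [|b s] Hl H1 H2 A HA;
    cbn in *; try discriminate; try contradiction.
  destruct H1 as [H1 H1'], H2 as [H2 H2'], HA as [<-|HA].
  - destruct b; cbn in *; tauto.
  - apply (IH s); auto.
Qed.

Lemma desc_wf {C P} ar (L : list (form C P)) s :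
  (forall A, In A L -> wf ar A /\ var_free A) -> wf ar (desc L s) /\ var_free (desc L s).
Proof.
  revert s. induction L as [|A L IH]; intros [|b s] H; cbn; try tauto.
  destruct (H A (or_introl eq_refl)), (IH s); auto with datatypes.
  destruct b; cbn; tauto.
Qed.

Lemma bigor_wf {C P} ar (l : list (form C P)) :
  (forall A, In A l -> wf ar A /\ var_free A) -> wf ar (bigor l) /\ var_free (bigor l).
Proof.
  induction l as [|A l IH]; intros H; cbn; auto.
  destruct (H A (or_introl eq_refl)), IH; auto with datatypes.
Qed.

Lemma bigor_desc_wf {C P} ar (L : list (form C P)) S :
  (forall A, In A L -> wf ar A /\ var_free A) ->
  wf ar (bigor (map (desc L) S)) /\ var_free (bigor (map (desc L) S)).
Proof.
  intros HL. apply bigor_wf. intros A HA. apply in_map_iff in HA. destruct HA as [s [<- _]].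
  now apply desc_wf.
Qed.

Section SafeSentence.
Context {C P : Type} (ar : P -> nat) (F M : form C P) (pre : list (quant * nat)).
Hypothesis F_wf : wf ar F.
Hypothesis F_sentence : sentence F.
Hypothesis F_prenex : F = prenex pre M.
Hypothesis M_qfree : qfree M.
Hypothesis pre_nodup : NoDup (map snd pre).
Hypothesis pre_sp_restricted : forall x, In x (map snd pre) -> sp_restricted x M.
Hypothesis pre_all : forall x, In (QAll, x) pre -> occ_covered (cover_all x) x true M.
Hypothesis pre_ex : forall x, In (QEx, x) pre -> occ_covered (cover_ex x) x true M.

Local Notation ps := (preds F).
Local Notation cs := (consts F).

Lemma matrix_wf_over : wf_over ar ps M.
Proof.
  rewrite F_prenex, prenex_preds. apply wf_over_preds.
  eapply prenex_wf. rewrite <- F_prenex. exact F_wf.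
Qed.

Lemma matrix_consts : incl (consts M) cs.
Proof. rewrite F_prenex, prenex_consts. apply incl_refl. Qed.

Lemma matrix_sp_restricted x : sp_restricted x M.
Proof.
  destruct (classic (In x (map snd pre))) as [Hx|Hx]; auto.
  apply sp_restricted_not_free; auto. intros Hf. apply (F_sentence x).
  rewrite F_prenex. now apply free_in_prenex.
Qed.

Lemma sat_F_prenex {D} (ic : C -> D) ip env : sat ic ip env F <-> sat ic ip env (prenex pre M).
Proof. now rewrite F_prenex. Qed.

Lemma sat_ht_F_prenex {D} (ic : C -> D) ip U env :
  sat_ht ic ip U env F <-> sat_ht ic ip U env (prenex pre M).
Proof. now rewrite F_prenex. Qed.

Lemma sat_SM_sentence {D} (ic : C -> D) ip env env' :
  sat_SM ar ic ip env F -> sat_SM ar ic ip env' F.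
Proof.
  intros [Hsat Hmin]. split.
  - rewrite <- sat_ht_refl in *. now apply (sat_ht_sentence ic ip ip F env).
  - intros [U [HU [Hne Hst]]]. apply Hmin. exists U. repeat split; auto.
    rewrite sat_star in *. now apply (sat_ht_sentence ic ip U F env').
Qed.

(* Otherwise the named part of [ip] would be a strictly smaller model of [F*]. *)
Lemma sat_SM_supported {D} (ic : C -> D) ip env :
  sat_SM ar ic ip env F -> supported ar ps cs ic ip.
Proof.
  intros [Hsat Hmin] p ds Hp Hl Hip d Hd. apply NNPP; intros Hnd. apply Hmin.
  exists (named_part cs ic ip). split; [|split].
  - intros p' _ ds' _ [H _]; exact H.
  - intros Heq. apply Hnd. apply (Heq p Hp ds Hl) in Hip. now apply Hip.
  - rewrite sat_star, sat_ht_F_prenex.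
    apply (sat_ht_named_part_prenex ar ps cs ic ip M pre env);
      auto using matrix_wf_over, matrix_consts, matrix_sp_restricted.
    now apply sat_F_prenex.
Qed.

Section Correspondence.
Context {D1 D2 : Type} (ic1 : C -> D1) (ip1 : P -> list D1 -> Prop)
  (ic2 : C -> D2) (ip2 : P -> list D2 -> Prop).
Hypothesis supp1 : supported ar ps cs ic1 ip1.
Hypothesis supp2 : supported ar ps cs ic2 ip2.
Hypothesis same_eqs : forall c c', In c cs -> In c' cs -> (ic1 c = ic1 c' <-> ic2 c = ic2 c').
Hypothesis same_atoms : forall p cl, In p ps -> length cl = ar p -> incl cl cs ->
  (ip1 p (map ic1 cl) <-> ip2 p (map ic2 cl)).
Variables (e1 : D1) (e2 : D2).
Hypothesis default_agree : forall c, In c cs -> (e1 = ic1 c <-> e2 = ic2 c).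

Definition corr (d1 : D1) (d2 : D2) : Prop :=
  (exists c, In c cs /\ d1 = ic1 c /\ d2 = ic2 c) \/ (d1 = e1 /\ d2 = e2).

Lemma corr_eq a1 a2 b1 b2 : corr a1 a2 -> corr b1 b2 -> (a1 = b1 <-> a2 = b2).
Proof.
  intros [[c [Hc [-> ->]]]|[-> ->]] [[c' [Hc' [-> ->]]]|[-> ->]].
  - now apply same_eqs.
  - specialize (default_agree c Hc). split; intros E; symmetry; apply default_agree; auto.
  - now apply default_agree.
  - tauto.
Qed.

Lemma corr_const c : In c cs -> corr (ic1 c) (ic2 c).
Proof. intros Hc. left. eauto. Qed.

Lemma corr_tuple_eq ds1 ds2 ds1' ds2' : Forall2 corr ds1 ds2 -> Forall2 corr ds1' ds2' ->
  (ds1 = ds1' <-> ds2 = ds2').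
Proof.
  intros H. revert ds1' ds2'.
  induction H as [|a1 a2 l1 l2 Ha Hl IH]; intros ds1' ds2' H';
    inversion H' as [|b1 b2 m1 m2 Hb Hm];
    subst; try (split; discriminate); [tauto|].
  split; intros E; injection E as E1 E2; f_equal;
    first [apply (corr_eq a1 a2 b1 b2 Ha Hb) | apply (IH m1 m2 Hm)]; auto.
Qed.

Lemma corr_map cl : incl cl cs -> Forall2 corr (map ic1 cl) (map ic2 cl).
Proof.
  induction cl as [|c cl IH]; intros Hcl; cbn; constructor.
  - apply corr_const, Hcl; now left.
  - apply IH. intros c' Hc'; apply Hcl; now right.
Qed.

Lemma corr_named_tuple ds1 ds2 : Forall2 corr ds1 ds2 ->
  (forall d, In d ds1 -> named cs ic1 d) \/ (forall d, In d ds2 -> named cs ic2 d) ->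
  exists cl, incl cl cs /\ ds1 = map ic1 cl /\ ds2 = map ic2 cl.
Proof.
  intros H [Hn|Hn]; [destruct (named_tuple cs ic1 ds1 Hn) as [cl [Hcl E]]
                    |destruct (named_tuple cs ic2 ds2 Hn) as [cl [Hcl E]]];
    exists cl; pose proof (corr_tuple_eq _ _ _ _ H (corr_map cl Hcl)); tauto.
Qed.

Lemma corr_interp : interp_corr ar ps corr ip1 ip2.
Proof.
  intros p ds1 ds2 Hp Hl H.
  assert (Hl2 : length ds2 = ar p) by now rewrite <- (Forall2_length H).
  split; intros Hip.
  - destruct (corr_named_tuple ds1 ds2 H (or_introl (supp1 p ds1 Hp Hl Hip)))
      as [cl [Hcl [-> ->]]].
    rewrite length_map in Hl. now apply same_atoms.
  - destruct (corr_named_tuple ds1 ds2 H (or_intror (supp2 p ds2 Hp Hl2 Hip)))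
      as [cl [Hcl [-> ->]]].
    rewrite length_map in Hl. now apply same_atoms.
Qed.

Definition corr_pull (U2 : P -> list D2 -> Prop) : P -> list D1 -> Prop :=
  fun p ds1 => exists ds2, Forall2 corr ds1 ds2 /\ U2 p ds2.

Lemma corr_pull_interp U2 : interp_corr ar ps corr (corr_pull U2) U2.
Proof.
  intros p ds1 ds2 Hp Hl H. split.
  - intros [ds2' [H' HU]]. now rewrite (proj1 (corr_tuple_eq _ _ _ _ H H') eq_refl).
  - intros HU. now exists ds2.
Qed.

Lemma corr_pull_le U2 : interp_le ar ps U2 ip2 -> interp_le ar ps (corr_pull U2) ip1.
Proof.
  intros HU p Hp ds1 Hl [ds2 [H HU2]]. apply (corr_interp p ds1 ds2 Hp Hl H).
  apply HU; auto. now rewrite <- (Forall2_length H).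
Qed.

Lemma corr_pull_eq U2 : interp_le ar ps U2 ip2 ->
  interp_eq ar ps (corr_pull U2) ip1 -> interp_eq ar ps U2 ip2.
Proof.
  intros HU Heq p Hp ds2 Hl. split; [apply HU; auto|]. intros Hip2.
  destruct (named_tuple cs ic2 ds2 (supp2 p ds2 Hp Hl Hip2)) as [cl [Hcl ->]].
  rewrite length_map in Hl.
  assert (Hl1 : length (map ic1 cl) = ar p) by now rewrite length_map.
  apply (corr_pull_interp U2 p _ _ Hp Hl1 (corr_map cl Hcl)), Heq; auto.
  now apply same_atoms.
Qed.

Lemma sat_SM_corr : sat_SM ar ic1 ip1 (fun _ => e1) F -> sat_SM ar ic2 ip2 (fun _ => e2) F.
Proof.
  assert (Henv : forall v : nat, corr e1 e2) by (intros; now right).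
  assert (Hflip_eq : forall a2 a1 b2 b1, corr a1 a2 -> corr b1 b2 -> (a2 = b2 <-> a1 = b1))
    by (intros; symmetry; now apply corr_eq).
  pose proof matrix_wf_over as Hwf. pose proof matrix_consts as Hcs.
  intros [Hsat Hmin]. split.
  - apply sat_ht_refl, sat_ht_F_prenex in Hsat. apply sat_ht_refl, sat_ht_F_prenex.
    exact (sat_ht_corr_prenex ar ps cs ic1 ic2 corr corr_eq corr_const M ip1 ip2 ip1 ip2
             pre _ _ M_qfree Hwf Hcs supp1 supp2 (interp_le_refl _ _ _) (interp_le_refl _ _ _)
             corr_interp corr_interp pre_nodup pre_all pre_ex Henv Hsat).
  - intros [U2 [HU2 [Hne Hst]]]. apply Hmin. exists (corr_pull U2). split; [|split].
    + now apply corr_pull_le.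
    + intros Heq. now apply Hne, corr_pull_eq.
    + apply sat_star, sat_ht_F_prenex in Hst. apply sat_star, sat_ht_F_prenex.
      exact (sat_ht_corr_prenex ar ps cs ic2 ic1 (fun a b => corr b a) Hflip_eq corr_const
               M ip2 ip1 U2 (corr_pull U2) pre _ _ M_qfree Hwf Hcs supp2 supp1 HU2
               (corr_pull_le U2 HU2) (interp_corr_flip _ _ _ _ _ corr_interp)
               (interp_corr_flip _ _ _ _ _ (corr_pull_interp U2))
               pre_nodup pre_all pre_ex Henv Hst).
Qed.

End Correspondence.

Lemma sat_SM_ground_invariant {D1 D2} (ic1 : C -> D1) ip1 env1 (ic2 : C -> D2) ip2 env2 :
  supported ar ps cs ic1 ip1 -> supported ar ps cs ic2 ip2 ->
  (forall A, In A (ground_atoms ar cs ps) -> (sat ic1 ip1 env1 A <-> sat ic2 ip2 env2 A)) ->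
  sat_SM ar ic1 ip1 env1 F -> sat_SM ar ic2 ip2 env2 F.
Proof.
  intros Hs1 Hs2 Hground HSM.
  assert (Heqs : forall c c', In c cs -> In c' cs -> (ic1 c = ic1 c' <-> ic2 c = ic2 c'))
    by (intros c c' Hc Hc'; exact (Hground _ (ground_eq_In ar cs ps c c' Hc Hc'))).
  assert (Hatoms : forall p cl, In p ps -> length cl = ar p -> incl cl cs ->
                     (ip1 p (map ic1 cl) <-> ip2 p (map ic2 cl))).
  { intros p cl Hp Hl Hcl. pose proof (Hground _ (ground_atom_In ar cs ps p cl Hp Hl Hcl)) as H.
    cbn in H. now rewrite !map_map in H. }
  assert (Hdef : exists e1 e2, forall c, In c cs -> (e1 = ic1 c <-> e2 = ic2 c)).
  { destruct cs as [|c0 cs'] eqn:E.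
    - exists (env1 0), (env2 0). intros c [].
    - exists (ic1 c0), (ic2 c0). intros c Hc. rewrite <- E in *. apply Heqs; auto.
      rewrite E. now left. }
  destruct Hdef as [e1 [e2 Hdef]].
  apply (sat_SM_sentence ic2 ip2 (fun _ => e2)),
    (sat_SM_corr ic1 ip1 ic2 ip2 Hs1 Hs2 Heqs Hatoms e1 e2 Hdef).
  now apply (sat_SM_sentence ic1 ip1 env1).
Qed.

End SafeSentence.

Theorem proposition4 (C P : Type) (ar : P -> nat) (F : form C P) :
  wf ar F -> sentence F -> safe F ->
  exists G : form C P,
    wf ar G /\ var_free G /\
    forall (D : Type) (ic : C -> D) (ip : P -> list D -> Prop) (env : nat -> D),
      sat_SM ar ic ip env F <->
      sat ic ip env (FAnd G (SPP ar (consts F) (preds F))).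
Proof.
  intros Hwf Hsent [_ [pre [M [HF [[Hq [Hnd Hsp]] [Hall Hex]]]]]].
  pose proof (@sat_SM_supported C P ar F M pre Hwf Hsent HF Hq Hsp) as SM_supported.
  pose proof (@sat_SM_ground_invariant C P ar F M pre Hwf Hsent HF Hq Hnd Hall Hex)
    as SM_invariant.
  set (L := ground_atoms ar (consts F) (preds F)).
  set (stable_desc := fun s => exists (D : Type) (ic : C -> D) ip env,
                                 sat ic ip env (desc L s) /\ sat_SM ar ic ip env F).
  destruct (classical_filter stable_desc (tuples [true; false] (length L))) as [S HS].
  exists (bigor (map (desc L) S)).
  destruct (bigor_desc_wf ar L S (ground_atoms_wf ar _ _)) as [HGwf HGvf].
  split; [exact HGwf|split; [exact HGvf|]].
  intros D ic ip env. cbn [sat]. rewrite sat_SPP, sat_bigor. split.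
  - intros HSM. split; [|exact (SM_supported D ic ip env HSM)].
    destruct (desc_exists ic ip env L) as [s [Hl Hd]].
    exists (desc L s). split; auto. apply in_map, HS. split.
    + apply tuples_complete; auto. intros b _. destruct b; cbn; auto.
    + exists D, ic, ip, env. auto.
  - intros [[f [Hf Hsat]] Hsupp]. apply in_map_iff in Hf. destruct Hf as [s [<- Hs]].
    apply HS in Hs. destruct Hs as [Hlen [D' [ic' [ip' [env' [Hd' HSM']]]]]].
    apply tuples_length in Hlen.
    apply (SM_invariant D' D ic' ip' env' ic ip env (SM_supported D' ic' ip' env' HSM') Hsupp).
    + exact (desc_agree ic' ip' env' ic ip env L s Hlen Hd' Hsat).
    + exact HSM'.
Qed.
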